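(* Consider the Bregman proximal augmented Lagrangian method described in the context with $\psi=\frac12\|\cdot\|^2$, $\phi$ Legendre and $0\le\rho_k\le\rho<1$. Let $(x^\star,y^\star)\in\operatorname{zer}T$ with $y^\star\in\operatorname{dom}\phi$ (so $y^\star\in\operatorname{argmin}F^*(0,\cdot)$), and assume that $\{y^{k+1}\}_{k\ge0}$ is bounded (which holds, e.g., if $D_\phi(y^\star,\cdot)$ is coercive). Then $F^*(v^k,y^{k+1})\to F^*(0,y^\star)$, and every limit point $y^\infty$ of $\{y^{k+1}\}_{k\ge0}$ is a dual solution, i.e. $y^\infty\in\operatorname{argmin}F^*(0,\cdot)$.
   Context: Let $f\in\Gamma_0(\mathbb{R}^n)$, $g\in\Gamma_0(\mathbb{R}^m)$ (proper lsc convex), $A\in\mathbb{R}^{m\times n}$, $b\in\mathbb{R}^m$, $\mathcal{A}(x)=Ax-b$. $L(x,y)=f(x)+\langle\mathcal{A}(x),y\rangle-g^*(y)$; KKT operator $T(x,y)=(\partial f(x)+A^\top y)\times(\partial g^*(y)+b-Ax)$ (maximal monotone), $\operatorname{zer}T=T^{-1}(0)$. The dual perturbation function is $F^*(v,y)=\sup_x\{\langle x,v\rangle-L(x,y)\}=f^*(v-A^\top y)+\langle b,y\rangle+g^*(y)$. A function $h\in\Gamma_0$ is Legendre if essentially smooth ($\operatorname{int}\operatorname{dom}h\ne\emptyset$, differentiable there, $\|\nabla h(z^\nu)\|\to\infty$ whenever $\operatorname{int}\operatorname{dom}h\ni z^\nu\to z\in\operatorname{bdry}\operatorname{dom}h$)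 and essentially strictly convex (strictly convex on every convex subset of $\operatorname{dom}\partial h$); $\nabla h^*$ is the inverse of $\nabla h$ on interiors of domains. $D_h(a,c)=h(a)-h(c)-\langle\nabla h(c),a-c\rangle$ for $a\in\operatorname{dom}h$, $c\in\operatorname{int}\operatorname{dom}h$, $+\infty$ otherwise. Let $\psi\in\Gamma_0(\mathbb{R}^n)$, $\phi\in\Gamma_0(\mathbb{R}^m)$ be Legendre, $\Phi(x,y)=\psi(x)+\phi(y)$, and assume $\operatorname{int}\operatorname{dom}\Phi\cap\operatorname{dom}T\ne\emptyset$. Bregman proximal augmented Lagrangian method: given $x^0\in\operatorname{int}\operatorname{dom}\psi$, $y^0\in\operatorname{int}\operatorname{dom}\phi$, step sizes $\sigma_k\ge\sigma>0$ and $\rho_k\in[0,1)$, it generates $s^k\in\operatorname{dom}\psi$, $x^{k+1},y^{k+1},v^k,u^k$ with $(v^k,u^k)\in T(s^k,y^{k+1})$, $x^{k+1}=\nabla\psi^*(\nabla\psi(x^k)-\sigma_kv^k)\in\operatorname{int}\operatorname{dom}\psi$, $y^{k+1}=\nabla\phi^*(\nabla\phi(y^k)-\sigma_ku^k)\in\operatorname{int}\operatorname{dom}\phi$, and $D_\psi(s^k,x^{k+1})\le\rho_k\big(D_\psi(s^k,x^k)+D_\phi(y^{k+1},y^k)\big)$. A function is coercive if it tends to $+\infty$ as the norm of its argument tends to $\infty$. *)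

From HB Require Import structures.
From mathcomp Require Import all_boot all_order all_algebra.
From mathcomp Require Import all_classical all_reals all_analysis.
Set Implicit Arguments. Unset Strict Implicit. Unset Printing Implicit Defensive.
Import Order.TTheory GRing.Theory Num.Theory.
Import numFieldNormedType.Exports.
Local Open Scope classical_set_scope.
Local Open Scope ring_scope.

Section Defs.
Variable R : realType.

Definition dot {n : nat} (u v : 'rV[R]_n) : R := \sum_(i < n) u 0 i * v 0 i.
Definition enorm {n : nat} (u : 'rV[R]_n) : R := Num.sqrt (dot u u).

Definition edom {T : Type} (h : T -> \bar R) : set T := [set x | (h x < +oo)%E].

Definition proper_fun {T : Type} (h : T -> \bar R) : Prop :=
  (forall x, h x != -oo%E) /\ exists x, h x \is a fin_num.

Definition convex_fun {n : nat} (h : 'rV[R]_n -> \bar R) : Prop :=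
  forall (x y : 'rV[R]_n) (t : R), 0 < t < 1 ->
    (h (t *: x + (1 - t) *: y)%R <= t%:E * h x + (1 - t)%R%:E * h y)%E.

Definition Gamma0 {n : nat} (h : 'rV[R]_n -> \bar R) : Prop :=
  proper_fun h /\ lower_semicontinuous h /\ convex_fun h.

Definition conj {n : nat} (h : 'rV[R]_n -> \bar R) (v : 'rV[R]_n) : \bar R :=
  ereal_sup [set ((dot x v)%:E - h x)%E | x in [set: 'rV[R]_n]].

Definition subdiff {n : nat} (h : 'rV[R]_n -> \bar R) (x : 'rV[R]_n) : set 'rV[R]_n :=
  [set w | h x \is a fin_num /\
           forall z, (h x + (dot w (z - x))%:E <= h z)%E].

Definition dom_subdiff {n : nat} (h : 'rV[R]_n -> \bar R) : set 'rV[R]_n :=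
  [set x | exists w, subdiff h x w].

Definition evec {n : nat} (i : 'I_n) : 'rV[R]_n := \row_j (i == j)%:R.

Definition grad {n : nat} (h : 'rV[R]_n -> \bar R) (z : 'rV[R]_n) : 'rV[R]_n :=
  \row_i ('D_(evec i) (fine \o h) z).

Definition convex_set_ {n : nat} (C : set 'rV[R]_n) : Prop :=
  forall x y (t : R), C x -> C y -> 0 <= t <= 1 -> C (t *: x + (1 - t) *: y).

Definition essentially_smooth {n : nat} (h : 'rV[R]_n -> \bar R) : Prop :=
  (interior (edom h) !=set0) /\
  (forall z, interior (edom h) z -> differentiable (fine \o h) z) /\
  (forall (zs : nat -> 'rV[R]_n) (z : 'rV[R]_n),
      (forall k, interior (edom h) (zs k)) ->
      zs @ \oo --> z ->
      (closure (edom h) `\` interior (edom h)) z ->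
      forall M : R, exists N, forall k, (N <= k)%N -> M < enorm (grad h (zs k))).

Definition essentially_strictly_convex {n : nat} (h : 'rV[R]_n -> \bar R) : Prop :=
  forall C : set 'rV[R]_n, convex_set_ C -> C `<=` dom_subdiff h ->
    forall x y (t : R), C x -> C y -> x != y -> 0 < t < 1 ->
      (h (t *: x + (1 - t) *: y)%R < t%:E * h x + (1 - t)%R%:E * h y)%E.

Definition Legendre {n : nat} (h : 'rV[R]_n -> \bar R) : Prop :=
  Gamma0 h /\ essentially_smooth h /\ essentially_strictly_convex h.

Definition Breg {n : nat} (h : 'rV[R]_n -> \bar R) (a c : 'rV[R]_n) : \bar R :=
  if `[< edom h a /\ interior (edom h) c >]
  then (h a - h c - (dot (grad h c) (a - c))%:E)%E
  else +oo%E.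

(* KKT operator: (v,u) \in T(x,y) *)
Definition KKT {n m : nat} (f : 'rV[R]_n -> \bar R) (g : 'rV[R]_m -> \bar R)
  (A : 'M[R]_(m, n)) (b : 'rV[R]_m) (x : 'rV[R]_n) (y : 'rV[R]_m)
  (vu : 'rV[R]_n * 'rV[R]_m) : Prop :=
  (exists2 a, subdiff f x a & vu.1 = a + y *m A) /\
  (exists2 c, subdiff (conj g) y c & vu.2 = c + b - x *m A^T).

Definition Fstar {n m : nat} (f : 'rV[R]_n -> \bar R) (g : 'rV[R]_m -> \bar R)
  (A : 'M[R]_(m, n)) (b : 'rV[R]_m) (v : 'rV[R]_n) (y : 'rV[R]_m) : \bar R :=
  (conj f (v - y *m A) + (dot b y)%:E + conj g y)%E.

Definition halfsq {n : nat} (x : 'rV[R]_n) : \bar R := (2^-1 * dot x x)%:E.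

(* Bregman proximal ALM iteration relations (nabla h^* = inverse of nabla h) *)
Definition BPALM {n m : nat} (f : 'rV[R]_n -> \bar R) (g : 'rV[R]_m -> \bar R)
  (A : 'M[R]_(m, n)) (b : 'rV[R]_m)
  (psi : 'rV[R]_n -> \bar R) (phi : 'rV[R]_m -> \bar R)
  (sigma rho : nat -> R)
  (s x v : nat -> 'rV[R]_n) (y u : nat -> 'rV[R]_m) : Prop :=
  interior (edom psi) (x 0%N) /\ interior (edom phi) (y 0%N) /\
  forall k : nat,
    edom psi (s k) /\
    KKT f g A b (s k) (y k.+1) (v k, u k) /\
    interior (edom psi) (x k.+1) /\
    grad psi (x k.+1) = grad psi (x k) - sigma k *: v k /\
    interior (edom phi) (y k.+1) /\
    grad phi (y k.+1) = grad phi (y k) - sigma k *: u k /\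
    (Breg psi (s k) (x k.+1) <=
       (rho k)%:E * (Breg psi (s k) (x k) + Breg phi (y k.+1) (y k)))%E.

End Defs.

(* Monotonicity of the KKT operator and the four-point identity for Bregman
   distances make the energy E_k = 1/2 |xs - x_k|^2 + D_phi(ys, y_k) decrease:
   with the gap G_k = <v_k, s_k - xs> + <u_k, y_{k+1} - ys> >= 0 and the
   residual Q_k = 1/2 |s_k - x_k|^2 + D_phi(y_{k+1}, y_k), the inexactness
   criterion yields sigma0 G_k + (1 - rho0) Q_k <= E_k - E_{k+1}.  So the
   decrements tend to 0, and with them G_k and |v_k|^2.  As (s_k, u_k) and
   (xs, 0) are subgradients of the convex function F* at (v_k, y_{k+1}) and at
   (0, ys), F*(v_k, y_{k+1}) - F*(0, ys) lies between <xs, v_k> and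
   <xs, v_k> + G_k, hence tends to 0; and F*(0, ys) is the minimum of F*(0, .).
   At a limit point yinf, lower semicontinuity of F* (a supremum of affine
   functions of (v, y)) gives F*(0, yinf) <= F*(0, ys). *)

From HB Require Import structures.
From mathcomp Require Import all_boot all_order all_algebra.
From mathcomp Require Import all_classical all_reals all_analysis.
From mathcomp Require Import ring lra.
Import Order.TTheory GRing.Theory Num.Theory.
Import numFieldNormedType.Exports.
Local Open Scope classical_set_scope.
Local Open Scope ring_scope.

Set Implicit Arguments. Unset Strict Implicit. Unset Printing Implicit Defensive.

Section Dot.
Variables (R : realType) (n : nat).
Implicit Types u w z : 'rV[R]_n.

Lemma dotC u w : dot u w = dot w u.
Proof. by apply: eq_bigr => i _; rewrite mulrC. Qed.

Lemma dotDl u w z : dot (u + w) z = dot u z + dot w z.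
Proof. by rewrite /dot -big_split; apply: eq_bigr => i _; rewrite mxE mulrDl. Qed.

Lemma dotDr u w z : dot z (u + w) = dot z u + dot z w.
Proof. by rewrite dotC dotDl !(dotC z). Qed.

Lemma dotNl u w : dot (- u) w = - dot u w.
Proof. by rewrite /dot -sumrN; apply: eq_bigr => i _; rewrite mxE mulNr. Qed.

Lemma dotNr u w : dot w (- u) = - dot w u.
Proof. by rewrite dotC dotNl dotC. Qed.

Lemma dotBl u w z : dot (u - w) z = dot u z - dot w z.
Proof. by rewrite dotDl dotNl. Qed.

Lemma dotBr u w z : dot z (u - w) = dot z u - dot z w.
Proof. by rewrite dotDr dotNr. Qed.

Lemma dotZl (a : R) u w : dot (a *: u) w = a * dot u w.
Proof. by rewrite /dot mulr_sumr; apply: eq_bigr => i _; rewrite mxE mulrA. Qed.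

Lemma dotZr (a : R) u w : dot w (a *: u) = a * dot w u.
Proof. by rewrite dotC dotZl dotC. Qed.

Lemma dot0l u : dot 0 u = 0.
Proof. by rewrite /dot big1 // => i _; rewrite mxE mul0r. Qed.

Lemma dot0r u : dot u 0 = 0.
Proof. by rewrite dotC dot0l. Qed.

Lemma dot_ge0 u : 0 <= dot u u.
Proof. by rewrite /dot sumr_ge0 // => i _; rewrite -expr2 sqr_ge0. Qed.

Lemma dot_evecl (i : 'I_n) z : dot (evec R i) z = z 0 i.
Proof.
rewrite /dot (bigD1 i) //= big1 ?addr0; first by rewrite mxE eqxx mul1r.
by move=> j ji; rewrite mxE eq_sym (negbTE ji) mul0r.
Qed.

Lemma row_sum_evec z : z = \sum_(j < n) z 0 j *: evec R j.
Proof.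
apply/rowP => k; rewrite summxE (bigD1 k) //= big1 ?addr0.
  by rewrite !mxE eqxx mulr1.
by move=> j jk; rewrite !mxE (negbTE jk) mulr0.
Qed.

Lemma dot_Cauchy_Schwarz u w : dot u w ^+ 2 <= dot u u * dot w w.
Proof.
have quad t : 2 * t * dot u w <= t ^+ 2 * dot u u + dot w w.
  by have := dot_ge0 (t *: u - w); rewrite !(dotBl, dotBr, dotZl, dotZr) (dotC w u); lra.
have [uu0|uu_neq0] := eqVneq (dot u u) 0.
  suff -> : dot u w = 0 by rewrite uu0 expr0n /= mul0r.
  apply/eqP/negP => uw_neq0.
  have := quad ((dot w w + 1) / (2 * dot u w)).
  rewrite uu0 mulr0 add0r [X in X <= _](_ : _ = dot w w + 1); first lra.
  by field; apply/negP.
have uu_gt0 : 0 < dot u u by rewrite lt_def uu_neq0 dot_ge0.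
rewrite mulrC -ler_pdivrMr //.
(* evaluate the quadratic bound at its minimiser *)
have := quad (dot u w / dot u u).
rewrite [X in X <= _ -> _](_ : _ = 2 * (dot u w ^+ 2 / dot u u)); last by field; rewrite gt_eqF.
rewrite [X in _ <= X + _ -> _](_ : _ = dot u w ^+ 2 / dot u u); last by field; rewrite gt_eqF.
lra.
Qed.

End Dot.

Lemma dot_mulmx (R : realType) n m (x : 'rV[R]_n) (y : 'rV[R]_m) (A : 'M[R]_(m, n)) :
  dot x (y *m A) = dot (x *m A^T) y.
Proof.
rewrite /dot; under eq_bigr do rewrite mxE big_distrr /=.
rewrite exchange_big /=; apply: eq_bigr => j _; rewrite mxE big_distrl /=.
by apply: eq_bigr => i _; rewrite mxE; ring.
Qed.

Section Bregman.
Variables (R : realType) (n : nat).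
Implicit Types (h : 'rV[R]_n -> \bar R) (a c d p : 'rV[R]_n).

Definition bregr h a c : R := fine (h a) - fine (h c) - dot (grad h c) (a - c).

Lemma Breg_EFin h a c : h a \is a fin_num -> h c \is a fin_num ->
  interior (edom h) c -> Breg h a c = (bregr h a c)%:E.
Proof.
move=> ha hc ic; rewrite /Breg asboolT; last by split=> //; case/fin_numPlt/andP: ha.
by rewrite /bregr -(fineK ha) -(fineK hc) -!EFinB.
Qed.

Lemma bregrxx h a : bregr h a a = 0.
Proof. by rewrite /bregr !subrr dot0r subr0. Qed.

Lemma bregr_four_point h a p c d :
  dot (grad h c - grad h d) (p - a) = bregr h a c - bregr h a d - bregr h p c + bregr h p d.
Proof. by rewrite /bregr !(dotBl, dotBr); ring. Qed.

Lemma fin_num_edom h z : proper_fun h -> edom h z -> h z \is a fin_num.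
Proof. by case=> hN _ hz; rewrite fin_numE hN (lt_eqF hz). Qed.

Lemma derive_grad h c d : differentiable (fine \o h) c ->
  'D_d (fine \o h) c = dot (grad h c) d.
Proof.
move=> dif; rewrite deriveE // {1}(row_sum_evec d) linear_sum /dot.
by apply: eq_bigr => j _; rewrite linearZ /= mxE -deriveE // mulrC.
Qed.

(* by convexity, the difference quotients of h at c in direction a - c are
   bounded by h a - h c; their limit is the directional derivative *)
Lemma bregr_ge0 h a c : proper_fun h -> convex_fun h ->
  differentiable (fine \o h) c -> edom h a -> edom h c -> 0 <= bregr h a c.
Proof.
move=> hp hc dif ea ec; have fa := fin_num_edom hp ea; have fc := fin_num_edom hp ec.
rewrite /bregr -derive_grad // subr_ge0.
set q := fun t : R => t^-1 *: ((fine \o h \o shift c) (t *: (a - c)) - (fine \o h) c).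
have cq : q @ 0^'+ --> 'D_(a - c) (fine \o h) c.
  have cq' : q @ 0^' --> 'D_(a - c) (fine \o h) c by exact: diff_derivable.
  apply: cvg_trans cq'; apply: cvg_app.
  by apply: within_subset => t /= t0; rewrite gt_eqF.
rewrite -(cvg_lim _ cq) //; apply: limr_le; first by apply/cvg_ex; eexists; exact: cq.
near=> t.
have t0 : 0 < t by near: t; exact: nbhs_right_gt.
have t1 : t < 1 by near: t; exact: nbhs_right_lt.
rewrite /q /=.
have -> : t *: (a - c) + c = t *: a + (1 - t) *: c by apply/rowP => i; rewrite !mxE; ring.
have := hc a c t; rewrite t0 t1 => /(_ isT).
rewrite -(fineK fa) -(fineK fc) -!EFinM -EFinD.
have : h (t *: a + (1 - t) *: c) != -oo%E by case: hp.
case: (h _) => [r| |] //= _; rewrite ?lee_fin /GRing.scale /= => E.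
rewrite ler_pdivrMl //; lra.
Unshelve. all: by end_near.
Qed.

End Bregman.

Section HalfSquare.
Variables (R : realType) (n : nat).
Implicit Types a c z : 'rV[R]_n.

Lemma grad_halfsq z : grad (@halfsq R n) z = z.
Proof.
apply/rowP => i; rewrite mxE /derive /=; apply: cvg_lim => //.
apply: (@cvg_trans _ ((fun h : R => h / 2 + z 0 i) @ 0^')).
  apply: near_eq_cvg; near=> h.
  have h0 : h != 0 by near: h; exact: nbhs_dnbhs_neq.
  rewrite /halfsq /= !(dotDl, dotDr, dotZl, dotZr) (dotC z) !dot_evecl.
  by rewrite mxE eqxx /= mulr1 /GRing.scale /=; field.
have lim0 : (fun h : R => h / 2 + z 0 i) @ nbhs 0 --> 0 / 2 + z 0 i.
  by apply: cvgD; [apply: cvgM; [exact: cvg_id | exact: cvg_cst] | exact: cvg_cst].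
by rewrite mul0r add0r in lim0; exact: cvg_within_filter.
Unshelve. all: by end_near.
Qed.

Lemma bregr_halfsq a c : bregr (@halfsq R n) a c = 2^-1 * dot (a - c) (a - c).
Proof. by rewrite /bregr grad_halfsq /halfsq /= !(dotBl, dotBr) (dotC a c); lra. Qed.

Lemma interior_edom_halfsq z : interior (edom (@halfsq R n)) z.
Proof.
suff -> : edom (@halfsq R n) = setT by rewrite interiorT.
by apply/seteqP; split => // w _; exact: ltry.
Qed.

End HalfSquare.

Section Conjugate.
Variables (R : realType) (n : nat).
Implicit Types (h : 'rV[R]_n -> \bar R) (a w x z : 'rV[R]_n).

Lemma conj_ge h w z : ((dot z w)%:E - h z <= conj h w)%E.
Proof. by apply: ereal_sup_ubound; exists z. Qed.

Lemma conj_le h w (l : R) : (forall z, h z != -oo%E) ->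
  (forall z, h z \is a fin_num -> dot z w - fine (h z) <= l) -> (conj h w <= l%:E)%E.
Proof.
move=> hN hl; apply: ge_ereal_sup => _ [z _ <-].
have := hN z; have := hl z; case: (h z) => [r hr _| _ _|//].
- by rewrite -EFinB lee_fin; exact: hr.
- by rewrite addeNy leNye.
Qed.

Lemma subdiff_ineq h x a z : subdiff h x a -> h z \is a fin_num ->
  fine (h x) + dot a (z - x) <= fine (h z).
Proof.
by case=> hx /(_ z) + hz; rewrite -(fineK hx) -(fineK hz) -EFinD lee_fin.
Qed.

Lemma conj_subdiffE h x a : subdiff h x a -> conj h a = ((dot x a)%:E - h x)%E.
Proof.
move=> ha; apply/eqP; rewrite eq_le conj_ge andbT.
have [hx hx_le] := ha; rewrite -(fineK hx) -EFinB; apply: conj_le => [z|z hz].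
  by move: (hx_le z); rewrite -(fineK hx) -EFinD; case: (h z).
have := subdiff_ineq ha hz; rewrite dotBr (dotC a z) (dotC a x); lra.
Qed.

End Conjugate.

Section DualFunction.
Variables (R : realType) (n m : nat).
Variables (f : 'rV[R]_n -> \bar R) (g : 'rV[R]_m -> \bar R).
Variables (A : 'M[R]_(m, n)) (b : 'rV[R]_m).
Implicit Types (s x v : 'rV[R]_n) (y u w : 'rV[R]_m).

Lemma Fstar_KKTE s y v u : KKT f g A b s y (v, u) ->
  Fstar f g A b v y = (dot s (v - y *m A) - fine (f s) + dot b y + fine (conj g y))%:E.
Proof.
move=> [[a ha /= ->] [c [gy _] _]]; rewrite /Fstar addrK (conj_subdiffE ha).
by have [fs _] := ha; rewrite -(fineK fs) -(fineK gy).
Qed.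

Lemma Fstar_subgrad s1 y1 v1 u1 v y : KKT f g A b s1 y1 (v1, u1) ->
  (Fstar f g A b v1 y1 + (dot s1 (v - v1) + dot u1 (y - y1))%:E <= Fstar f g A b v y)%E.
Proof.
move=> kkt; rewrite (Fstar_KKTE kkt) /Fstar.
case: kkt => [[a [fs _] /= ->] [c [gy1 gc] /= ->]].
apply: le_trans (leeD (leeD (conj_ge f (v - y *m A) s1) (lexx _)) (gc y)).
rewrite -(fineK fs) -(fineK gy1) -!EFinB -!EFinD lee_fin /=.
rewrite !(dotDl, dotDr, dotBl, dotBr, dotNl, dotNr, dot_mulmx); lra.
Qed.

Lemma KKT_monotone s1 y1 v1 u1 s2 y2 v2 u2 :
  KKT f g A b s1 y1 (v1, u1) -> KKT f g A b s2 y2 (v2, u2) ->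
  0 <= dot (v1 - v2) (s1 - s2) + dot (u1 - u2) (y1 - y2).
Proof.
move=> kkt1 kkt2; have := Fstar_subgrad v2 y2 kkt1; have := Fstar_subgrad v1 y1 kkt2.
rewrite (Fstar_KKTE kkt1) (Fstar_KKTE kkt2) -!EFinD !lee_fin.
rewrite (dotC (v1 - v2)) !(dotBl, dotBr); lra.
Qed.

Lemma Fstar_ge_affine x w v y : f x \is a fin_num -> g w \is a fin_num ->
  ((dot x (v - y *m A) - fine (f x) + dot b y + (dot w y - fine (g w)))%:E
    <= Fstar f g A b v y)%E.
Proof.
move=> fx gw; apply: le_trans (leeD (leeD (conj_ge f (v - y *m A) x) (lexx _)) (conj_ge g y w)).
by rewrite -(fineK fx) -(fineK gw) -!EFinB -!EFinD.
Qed.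

Lemma Fstar_le_affine v y (l : R) : proper_fun f -> proper_fun g ->
  (forall x w, f x \is a fin_num -> g w \is a fin_num ->
     dot x (v - y *m A) - fine (f x) + dot b y + (dot w y - fine (g w)) <= l) ->
  (Fstar f g A b v y <= l%:E)%E.
Proof.
move=> [fN [x0 fx0]] [gN [w0 gw0]] hl.
set Sf := conj f (v - y *m A).
have Sf_le w : g w \is a fin_num -> (Sf <= (l - dot b y - (dot w y - fine (g w)))%:E)%E.
  by move=> gw; apply: conj_le => // x fx; have := hl x w fx gw; lra.
have Sf_fin : Sf \is a fin_num.
  rewrite fin_numElt; apply/andP; split; last exact: le_lt_trans (Sf_le w0 gw0) (ltry _).
  by apply: lt_le_trans (conj_ge f _ x0); rewrite -(fineK fx0) -EFinB ltNyr.
have Sg_le : (conj g y <= (l - dot b y - fine Sf)%:E)%E.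
  apply: conj_le => // w gw; have := Sf_le w gw.
  by rewrite -(fineK Sf_fin) lee_fin; lra.
rewrite /Fstar -/Sf -(fineK Sf_fin); apply: le_trans (leeD (lexx _) Sg_le) _.
by rewrite -!EFinD lee_fin; lra.
Qed.

Lemma Fstar_KKT_argmin xs ys z :
  KKT f g A b xs ys (0, 0) -> (Fstar f g A b 0 ys <= Fstar f g A b 0 z)%E.
Proof.
by move=> kkt; have := Fstar_subgrad 0 z kkt; rewrite subrr dot0r dot0l addr0 adde0.
Qed.

End DualFunction.


Section Sequences.
Variable R : realType.
Implicit Types w e E : nat -> R.

Lemma cvg0_sqr_le w e : (forall k, w k ^+ 2 <= e k) -> e @ \oo --> 0 -> w @ \oo --> 0.
Proof.
move=> we e0; apply/cvgr0Pnorm_lt => eps eps_gt0; near=> k.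
have : e k < eps ^+ 2 by near: k; exact: (cvgr_lt 0 e0 _ (exprn_gt0 2 eps_gt0)).
have := we k => wk ek; rewrite ltr_norml; apply/andP; split; nra.
Unshelve. all: by end_near.
Qed.

Lemma cvg_decrement0 E : (forall k, E k.+1 <= E k) -> (forall k, 0 <= E k) ->
  (fun k => E k - E k.+1) @ \oo --> 0.
Proof.
move=> E_noninc E_ge0; have /cvg_ex[l El] : cvgn E.
  apply: nonincreasing_is_cvgn; first exact/nonincreasing_seqP.
  by exists 0 => _ [k _ <-].
rewrite -(subrr l); apply: cvgB => //.
by rewrite -[X in X @ \oo --> _]/([sequence E k.+1]_k) cvg_shiftS.
Qed.

Lemma increasing_cvgn (phi : nat -> nat) : (forall k, (phi k < phi k.+1)%N) ->
  phi @ \oo --> \oo.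
Proof.
move=> phi_incr; have phi_ge k : (k <= phi k)%N.
  by elim: k => // k IH; exact: leq_ltn_trans IH (phi_incr k).
apply/cvgnyPge => N; near=> k; apply: leq_trans (phi_ge k); near: k.
exact: nbhs_infty_ge.
Unshelve. all: by end_near.
Qed.

Lemma cvg_dot n (p : 'rV[R]_n) (q_ : nat -> 'rV[R]_n) q :
  q_ @ \oo --> q -> (fun k => dot p (q_ k)) @ \oo --> dot p q.
Proof.
move=> qq; apply: cvg_big => // [|i _]; first exact: add_continuous.
apply: cvgM; first exact: cvg_cst.
have entry_cont : continuous (fun M : 'rV[R]_n => M 0 i).
  move=> M B /nbhs_ballP[e /= e_gt0 eB].
  by apply/nbhs_ballP; exists e => //= N [_ MN]; apply: eB; exact: MN.
exact: cvg_comp qq (entry_cont q).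
Qed.

End Sequences.

Section DualLowerSemicontinuity.
Variables (R : realType) (n m : nat).
Variables (f : 'rV[R]_n -> \bar R) (g : 'rV[R]_m -> \bar R).
Variables (A : 'M[R]_(m, n)) (b : 'rV[R]_m).
Hypotheses (fP : proper_fun f) (gP : proper_fun g).

(* F* is a supremum of affine functions of (v, y), and the v-dependence only
   needs weak convergence of [v_k] to pass to the limit *)
Lemma Fstar_lsc (v_ : nat -> 'rV[R]_n) (y_ : nat -> 'rV[R]_m) y (F_ : nat -> R) l :
  (forall k, Fstar f g A b (v_ k) (y_ k) = (F_ k)%:E) -> F_ @ \oo --> l ->
  (forall p, (fun k => dot p (v_ k)) @ \oo --> 0) -> y_ @ \oo --> y ->
  (Fstar f g A b 0 y <= l%:E)%E.
Proof.
move=> FE Fl v0 yy; apply: Fstar_le_affine => // x w fx gw.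
pose aff k := dot x (v_ k) - dot x (y_ k *m A) - fine (f x) + dot b (y_ k) + (dot w (y_ k) - fine (g w)).
apply: (ler_cvg_to (f := aff) (l := dot x (0 - y *m A) - fine (f x) + dot b y + (dot w y - fine (g w))) _ Fl).
  have yA : (fun k => dot x (y_ k *m A)) @ \oo --> dot x (y *m A).
    by under eq_fun do rewrite dot_mulmx; rewrite dot_mulmx; exact: cvg_dot.
  rewrite /aff dotBr dot0r.
  apply: cvgD; last by apply: cvgB; [exact: cvg_dot | exact: cvg_cst].
  apply: cvgD; last exact: cvg_dot.
  by apply: cvgB; [apply: cvgB; [exact: v0 | exact: yA] | exact: cvg_cst].
by apply: nearW => k; have := Fstar_ge_affine A b (v_ k) (y_ k) fx gw; rewrite FE lee_fin dotBr.
Qed.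

End DualLowerSemicontinuity.

Section BPALM_halfsq.
Variables (R : realType) (n m : nat).
Variables (f : 'rV[R]_n -> \bar R) (g : 'rV[R]_m -> \bar R).
Variables (A : 'M[R]_(m, n)) (b : 'rV[R]_m) (phi : 'rV[R]_m -> \bar R).
Variables (sigma rho : nat -> R) (sigma0 rho0 : R).
Variables (s x v : nat -> 'rV[R]_n) (y u : nat -> 'rV[R]_m).
Variables (xs : 'rV[R]_n) (ys : 'rV[R]_m).
Hypotheses (fP : proper_fun f) (gP : proper_fun g) (phiP : proper_fun phi) (phiC : convex_fun phi)
  (phiD : forall z, interior (edom phi) z -> differentiable (fine \o phi) z).
Hypotheses (sigma0_gt0 : 0 < sigma0) (sigma_ge : forall k, sigma0 <= sigma k)
  (rho0_lt1 : rho0 < 1) (rho_le : forall k, rho k <= rho0).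
Hypothesis iter : BPALM f g A b (@halfsq R n) phi sigma rho s x v y u.
Hypotheses (kkt_star : KKT f g A b xs ys (0, 0)) (ys_dom : edom phi ys).

Let psi := @halfsq R n.

Let energy k := bregr psi xs (x k) + bregr phi ys (y k).
Let residual k := bregr psi (s k) (x k) + bregr phi (y k.+1) (y k).
Let gap k := dot (v k) (s k - xs) + dot (u k) (y k.+1 - ys).
Let decrement k := energy k - energy k.+1.

Lemma BPALM_y_int k : interior (edom phi) (y k).
Proof. by have [_ [y0 step]] := iter; case: k => [|k] //; have [_ [_ [_ [_ []]]]] := step k. Qed.

Lemma BPALM_y_dom k : edom phi (y k).
Proof. exact: interior_subset (BPALM_y_int k). Qed.

Lemma BPALM_KKT k : KKT f g A b (s k) (y k.+1) (v k, u k).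
Proof. by have [_ [_ step]] := iter; have [_ []] := step k. Qed.

Lemma BPALM_x_step k : grad psi (x k) - grad psi (x k.+1) = sigma k *: v k.
Proof.
by have [_ [_ step]] := iter; have [_ [_ [_ [-> _]]]] := step k; rewrite opprB addrC subrK.
Qed.

Lemma BPALM_y_step k : grad phi (y k) - grad phi (y k.+1) = sigma k *: u k.
Proof.
by have [_ [_ step]] := iter; have [_ [_ [_ [_ [_ [-> _]]]]]] := step k; rewrite opprB addrC subrK.
Qed.

Lemma BPALM_inexact k : bregr psi (s k) (x k.+1) <= rho k * residual k.
Proof.
have [_ [_ step]] := iter; have [_ [_ [_ [_ [_ [_ +]]]]]] := step k.
have yfin j : phi (y j) \is a fin_num := fin_num_edom phiP (BPALM_y_dom j).
rewrite !Breg_EFin ?yfin //; first exact: BPALM_y_int.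
all: exact: interior_edom_halfsq.
Qed.

Lemma bregr_phi_ge0 a c : edom phi a -> interior (edom phi) c -> 0 <= bregr phi a c.
Proof. by move=> a_dom c_int; apply: bregr_ge0 => //; [exact: phiD | exact: interior_subset]. Qed.

Lemma bregr_psi_ge0 a c : 0 <= bregr psi a c.
Proof. by rewrite bregr_halfsq mulr_ge0 ?invr_ge0 ?dot_ge0. Qed.

Lemma residual_ge0 k : 0 <= residual k.
Proof.
exact: addr_ge0 (bregr_psi_ge0 _ _) (bregr_phi_ge0 (BPALM_y_dom k.+1) (BPALM_y_int k)).
Qed.

Lemma energy_ge0 k : 0 <= energy k.
Proof. exact: addr_ge0 (bregr_psi_ge0 _ _) (bregr_phi_ge0 ys_dom (BPALM_y_int k)). Qed.

Lemma gap_ge0 k : 0 <= gap k.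
Proof. by have := KKT_monotone (BPALM_KKT k) kkt_star; rewrite !subr0. Qed.

Lemma gap_identity k :
  sigma k * gap k = decrement k - residual k + bregr psi (s k) (x k.+1).
Proof.
rewrite mulrDr -!dotZl -BPALM_x_step -BPALM_y_step !bregr_four_point bregrxx.
by rewrite /decrement /energy /residual; ring.
Qed.

Lemma gap_residual_le k : sigma0 * gap k + (1 - rho0) * residual k <= decrement k.
Proof.
have := ler_wpM2r (gap_ge0 k) (sigma_ge k).
have := ler_wpM2r (residual_ge0 k) (rho_le k).
have := gap_identity k; have := BPALM_inexact k; lra.
Qed.

Lemma residual_le k : (1 - rho0) * residual k <= decrement k.
Proof. by have := gap_residual_le k; have := mulr_ge0 (ltW sigma0_gt0) (gap_ge0 k); lra. Qed.

Lemma gap_le k : sigma0 * gap k <= decrement k.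
Proof.
have rho0_le1 : 0 <= 1 - rho0 by have := rho0_lt1; lra.
by have := gap_residual_le k; have := mulr_ge0 rho0_le1 (residual_ge0 k); lra.
Qed.

Lemma decrement_cvg0 : decrement @ \oo --> 0.
Proof.
apply: cvg_decrement0 => [k|]; last exact: energy_ge0.
have rho0_le1 : 0 <= 1 - rho0 by have := rho0_lt1; lra.
by have := residual_le k; have := mulr_ge0 rho0_le1 (residual_ge0 k); rewrite /decrement; lra.
Qed.

Lemma v_sqr_le k :
  sigma0 ^+ 2 * dot (v k) (v k) <= 8 / (1 - rho0) * decrement k.
Proof.
have xs_step := BPALM_x_step k; rewrite !grad_halfsq in xs_step.
have sv : sigma k ^+ 2 * dot (v k) (v k) <= 4 * residual k + 4 * bregr psi (s k) (x k.+1).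
  rewrite expr2 -mulrA -dotZr -dotZl -xs_step /residual !bregr_halfsq.
  have := bregr_phi_ge0 (BPALM_y_dom k.+1) (BPALM_y_int k).
  have := dot_ge0 (x k - s k - (s k - x k.+1)).
  by rewrite !(dotDl, dotDr, dotBl, dotBr, dotNl, dotNr); lra.
have sigma_sqr : sigma0 ^+ 2 <= sigma k ^+ 2.
  by rewrite ler_pXn2r ?nnegrE ?(ltW sigma0_gt0) //; have := sigma_ge k; have := sigma0_gt0; lra.
have rho_le1 : rho k <= 1 by have := rho_le k; have := rho0_lt1; lra.
have rho0_gt0 : 0 < 1 - rho0 by have := rho0_lt1; lra.
have res_le : residual k <= (1 - rho0)^-1 * decrement k by rewrite ler_pdivlMl // residual_le.
have := ler_wpM2r (dot_ge0 (v k)) sigma_sqr; have := ler_wpM2r (residual_ge0 k) rho_le1.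
have := BPALM_inexact k; rewrite -mulrA; lra.
Qed.

Lemma dot_v_cvg0 p : (fun k => dot p (v k)) @ \oo --> 0.
Proof.
pose C := dot p p * (8 / (1 - rho0) / sigma0 ^+ 2).
apply: (@cvg0_sqr_le _ _ (fun k => C * decrement k)) => [k|].
  apply: le_trans (dot_Cauchy_Schwarz p (v k)) _; rewrite /C -mulrA.
  apply: ler_wpM2l; first exact: dot_ge0.
  by rewrite mulrAC ler_pdivlMr ?exprn_gt0 // mulrC v_sqr_le.
by rewrite -(mulr0 C); apply: cvgM; [exact: cvg_cst | exact: decrement_cvg0].
Qed.

Let Fiter k := fine (Fstar f g A b (v k) (y k.+1)).
Let Fopt := fine (Fstar f g A b 0 ys).

Lemma Fstar_iterE k : Fstar f g A b (v k) (y k.+1) = (Fiter k)%:E.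
Proof. by rewrite /Fiter (Fstar_KKTE (BPALM_KKT k)). Qed.

Lemma Fstar_optE : Fstar f g A b 0 ys = Fopt%:E.
Proof. by rewrite /Fopt (Fstar_KKTE kkt_star). Qed.

Lemma Fiter_bounds k : dot xs (v k) <= Fiter k - Fopt <= dot xs (v k) + gap k.
Proof.
have := Fstar_subgrad (v k) (y k.+1) kkt_star; have := Fstar_subgrad 0 ys (BPALM_KKT k).
rewrite Fstar_iterE Fstar_optE -!EFinD !lee_fin subr0 sub0r dot0l addr0 => hi lo.
move: hi; rewrite /gap !(dotBr, dotNr) !(dotC (v k)) => hi.
by apply/andP; split; lra.
Qed.

Lemma Fiter_cvg : Fiter @ \oo --> Fopt.
Proof.
have lo : (fun k => Fopt + dot xs (v k)) @ \oo --> Fopt.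
  by rewrite -[X in _ --> X]addr0; apply: cvgD; [exact: cvg_cst | exact: dot_v_cvg0].
have hi : (fun k => Fopt + dot xs (v k) + sigma0^-1 * decrement k) @ \oo --> Fopt.
  rewrite -[X in _ --> X]addr0 -(mulr0 sigma0^-1).
  by apply: cvgD => //; apply: cvgM; [exact: cvg_cst | exact: decrement_cvg0].
apply: (squeeze_cvgr _ lo hi); apply: nearW => k.
have := Fiter_bounds k; have := gap_le k.
rewrite -ler_pdivlMl //; lra.
Qed.

Theorem Fstar_iter_cvg :
  (fun k => Fstar f g A b (v k) (y k.+1)) @ \oo --> Fstar f g A b 0 ys.
Proof.
rewrite Fstar_optE; apply/cvg_EFin; last exact: Fiter_cvg.
by apply: nearW => k; rewrite Fstar_iterE.
Qed.

Theorem Fstar_cluster_le yinf (phi_ : nat -> nat) : (forall k, (phi_ k < phi_ k.+1)%N) ->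
  (fun k => y (phi_ k).+1) @ \oo --> yinf ->
  (Fstar f g A b 0 yinf <= Fstar f g A b 0 ys)%E.
Proof.
move=> /increasing_cvgn phi_oo y_cvg; rewrite Fstar_optE.
apply: (Fstar_lsc fP gP (v_ := v \o phi_) (F_ := Fiter \o phi_) _ _ _ y_cvg).
- by move=> k; exact: Fstar_iterE.
- exact: cvg_comp phi_oo Fiter_cvg.
- by move=> p; exact: cvg_comp phi_oo (dot_v_cvg0 p).
Qed.

End BPALM_halfsq.

Theorem mainTheorem14 (R : realType) (n m : nat)
  (f : 'rV[R]_n -> \bar R) (g : 'rV[R]_m -> \bar R)
  (A : 'M[R]_(m, n)) (b : 'rV[R]_m) (phi : 'rV[R]_m -> \bar R)
  (sigma rho : nat -> R) (sigma0 rho0 : R)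
  (s x v : nat -> 'rV[R]_n) (y u : nat -> 'rV[R]_m)
  (xs : 'rV[R]_n) (ys : 'rV[R]_m) :
  Gamma0 f -> Gamma0 g -> Legendre phi ->
  (exists p : 'rV[R]_n * 'rV[R]_m,
      interior (edom (fun q : 'rV[R]_n * 'rV[R]_m => (halfsq q.1 + phi q.2)%E)) p /\
      exists vu, KKT f g A b p.1 p.2 vu) ->
  0 < sigma0 -> (forall k, sigma0 <= sigma k) ->
  rho0 < 1 -> (forall k, 0 <= rho k <= rho0) ->
  BPALM f g A b (@halfsq R n) phi sigma rho s x v y u ->
  KKT f g A b xs ys (0, 0) -> edom phi ys ->
  (exists M : R, forall k, enorm (y k.+1) <= M) ->
  ((fun k => Fstar f g A b (v k) (y k.+1)) @ \oo --> Fstar f g A b 0 ys) /\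
  (forall yinf : 'rV[R]_m,
     (exists phi_ : nat -> nat, (forall k, (phi_ k < phi_ k.+1)%N) /\
        (fun k => y (phi_ k).+1) @ \oo --> yinf) ->
     forall z : 'rV[R]_m, (Fstar f g A b 0 yinf <= Fstar f g A b 0 z)%E).
Proof.
move=> [fP _] [gP _] [[phiP [_ phiC]] [[_ [phiD _]] _]] _ sigma0_gt0 sigma_ge rho0_lt1
  rho_bounds iter kkt_star ys_dom _.
have rho_le k : rho k <= rho0 by have /andP[] := rho_bounds k.
split; first exact: Fstar_iter_cvg phiP phiC phiD sigma0_gt0 sigma_ge rho0_lt1 rho_le iter kkt_star ys_dom.
move=> yinf [phi_ [phi_incr y_cvg]] z.
apply: le_trans (Fstar_KKT_argmin z kkt_star).
exact: Fstar_cluster_le fP gP phiP phiC phiD sigma0_gt0 sigma_ge rho0_lt1 rho_le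
  iter kkt_star ys_dom yinf phi_ phi_incr y_cvg.
Qed.
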